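(* Let $f\colon M\to\mathbb H$ be a minimal conformal immersion with right normal $R$, and let $d^S_\lambda$ be the associated family of connections of its conformal Gauss map. For $\mu\in\mathbb C\setminus\{0,1\}$, a section $\varphi\colon\tilde M\to\mathbb H^2$ is $d^S_\mu$-parallel if and only if either $\varphi=en$ for a constant $n\in\mathbb H$, or $\varphi=e\alpha+\psi\beta$ with $$\alpha=-f^*m-fm\,\frac{i(1+\mu)}{1-\mu},\qquad \beta=Rm+m\,\frac{i(1+\mu)}{1-\mu}$$ for some $m\in\mathbb H_*$ and some conjugate surface $f^*$ of $f$.
   Context: Quaternions $\mathbb H$, $\mathbb H_*=\mathbb H\setminus\{0\}$, $\mathbb C=\operatorname{span}_{\mathbb R}\{1,i\}\subset\mathbb H$. $M$ Riemann surface, $\tilde M$ its universal cover, $*\omega(X)=\omega(JX)$. Normals: $*df=N\,df=-df\,R$. A conjugate surface $f^*\colon\tilde M\to\mathbb H$ satisfies $df^*=-*df$. On $\tilde M\times\mathbb H^2$ (quaternionic right module, complex structure $I$ = right multiplication by $i$) let $e=(1,0)^t$, $\psi=(f,1)^t$, $G=\begin{pmatrix}1&f\\0&1\end{pmatrix}$. For minimal $f$ the Hopf field $A$ of the conformal Gauss map is the $\operatorname{End}(\mathbb H^2)$-valued 1-form with $2*A=G\begin{pmatrix}0&0\\0&dR\end{pmatrix}G^{-1}$. Put $A^{(1,0)}\varphi=\tfrac12(A\varphi-( *A\varphi)i)$, $A^{(0,1)}\varphi=\tfrac12(A\varphi+( *A\varphi)i)$ and $d^S_\lambda=d+(\lambda-1)A^{(1,0)}+(\lambda^{-1}-1)A^{(0,1)}$,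 $\lambda\in\mathbb C_*$. *)

From Stdlib Require Import Reals List ClassicalEpsilon.
Open Scope R_scope.

Record H := mkH { h0 : R; h1 : R; h2 : R; h3 : R }.

Definition hzero : H := mkH 0 0 0 0.
Definition hone : H := mkH 1 0 0 0.
Definition hi : H := mkH 0 1 0 0.
Definition hadd (a b : H) : H :=
  mkH (h0 a + h0 b) (h1 a + h1 b) (h2 a + h2 b) (h3 a + h3 b).
Definition hopp (a : H) : H := mkH (- h0 a) (- h1 a) (- h2 a) (- h3 a).
Definition hsub (a b : H) : H := hadd a (hopp b).
Definition hscal (r : R) (a : H) : H := mkH (r * h0 a) (r * h1 a) (r * h2 a) (r * h3 a).
Definition hmul (a b : H) : H :=
  mkH (h0 a * h0 b - h1 a * h1 b - h2 a * h2 b - h3 a * h3 b)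
      (h0 a * h1 b + h1 a * h0 b + h2 a * h3 b - h3 a * h2 b)
      (h0 a * h2 b - h1 a * h3 b + h2 a * h0 b + h3 a * h1 b)
      (h0 a * h3 b + h1 a * h2 b - h2 a * h1 b + h3 a * h0 b).
Definition hconj (a : H) : H := mkH (h0 a) (- h1 a) (- h2 a) (- h3 a).
Definition hnorm2 (a : H) : R := h0 a * h0 a + h1 a * h1 a + h2 a * h2 a + h3 a * h3 a.
(* inverse a^{-1} = conj(a)/|a|^2 (meaningful for a <> 0) *)
Definition hinv (a : H) : H := hscal (/ hnorm2 a) (hconj a).
Definition hdot (a b : H) : R := h0 a * h0 b + h1 a * h1 b + h2 a * h2 b + h3 a * h3 b.

Definition is_complex (z : H) : Prop := h2 z = 0 /\ h3 z = 0.

Definition open2 (U : R -> R -> Prop) : Prop :=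
  forall x y, U x y -> exists r, 0 < r /\
    forall x' y', Rabs (x' - x) < r -> Rabs (y' - y) < r -> U x' y'.

Definition connected2 (U : R -> R -> Prop) : Prop :=
  forall V W : R -> R -> Prop, open2 V -> open2 W ->
    (forall x y, U x y -> V x y \/ W x y) ->
    (forall x y, U x y -> ~ (V x y /\ W x y)) ->
    (forall x y, U x y -> V x y) \/ (forall x y, U x y -> W x y).

Definition is_dx (g : R -> R -> R) (x y v : R) : Prop :=
  derivable_pt_lim (fun t => g t y) x v.
Definition is_dy (g : R -> R -> R) (x y v : R) : Prop :=
  derivable_pt_lim (fun t => g x t) y v.

(* the partial derivative (value chosen by Hilbert's epsilon; it is the
   derivative whenever it exists, which is always the case below) *)
Definition dx (g : R -> R -> R) (x y : R) : R :=
  epsilon (inhabits 0) (fun v => is_dx g x y v).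
Definition dy (g : R -> R -> R) (x y : R) : R :=
  epsilon (inhabits 0) (fun v => is_dy g x y v).

Definition continuous2_on (U : R -> R -> Prop) (g : R -> R -> R) : Prop :=
  forall x y, U x y -> forall eps, 0 < eps -> exists delta, 0 < delta /\
    forall x' y', U x' y' -> Rabs (x' - x) < delta -> Rabs (y' - y) < delta ->
      Rabs (g x' y' - g x y) < eps.

(* D w is the iterated partial derivative along the word w
   (false = d/dx, true = d/dy, the head letter being applied last). *)
Definition smooth_on (U : R -> R -> Prop) (g : R -> R -> R) : Prop :=
  exists D : list bool -> R -> R -> R,
    D nil = g /\
    forall w, continuous2_on U (D w) /\
      forall x y, U x y ->
        is_dx (D w) x y (D (false :: w) x y) /\ is_dy (D w) x y (D (true :: w) x y).

Definition Hsmooth_on (U : R -> R -> Prop) (F : R -> R -> H) : Prop :=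
  smooth_on U (fun x y => h0 (F x y)) /\ smooth_on U (fun x y => h1 (F x y)) /\
  smooth_on U (fun x y => h2 (F x y)) /\ smooth_on U (fun x y => h3 (F x y)).

Definition Hdx (F : R -> R -> H) (x y : R) : H :=
  mkH (dx (fun a b => h0 (F a b)) x y) (dx (fun a b => h1 (F a b)) x y)
      (dx (fun a b => h2 (F a b)) x y) (dx (fun a b => h3 (F a b)) x y).
Definition Hdy (F : R -> R -> H) (x y : R) : H :=
  mkH (dy (fun a b => h0 (F a b)) x y) (dy (fun a b => h1 (F a b)) x y)
      (dy (fun a b => h2 (F a b)) x y) (dy (fun a b => h3 (F a b)) x y).

Definition is_Hdx (F : R -> R -> H) (x y : R) (v : H) : Prop :=
  is_dx (fun a b => h0 (F a b)) x y (h0 v) /\ is_dx (fun a b => h1 (F a b)) x y (h1 v) /\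
  is_dx (fun a b => h2 (F a b)) x y (h2 v) /\ is_dx (fun a b => h3 (F a b)) x y (h3 v).
Definition is_Hdy (F : R -> R -> H) (x y : R) (v : H) : Prop :=
  is_dy (fun a b => h0 (F a b)) x y (h0 v) /\ is_dy (fun a b => h1 (F a b)) x y (h1 v) /\
  is_dy (fun a b => h2 (F a b)) x y (h2 v) /\ is_dy (fun a b => h3 (F a b)) x y (h3 v).

(* differential of F applied to the tangent vector X = a d/dx + b d/dy *)
Definition Hd (F : R -> R -> H) (x y a b : R) : H :=
  hadd (hscal a (Hdx F x y)) (hscal b (Hdy F x y)).

Definition conformal_immersion (U : R -> R -> Prop) (f : R -> R -> H) : Prop :=
  Hsmooth_on U f /\
  forall x y, U x y ->
    Hdx f x y <> hzero /\
    hnorm2 (Hdx f x y) = hnorm2 (Hdy f x y) /\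
    hdot (Hdx f x y) (Hdy f x y) = 0.

(* R is the right normal:  *df = - df R, where ( *omega)(X) = omega(JX) and
   J d/dx = d/dy, so for X = a d/dx + b d/dy we have JX = -b d/dx + a d/dy *)
Definition right_normal (U : R -> R -> Prop) (f Rn : R -> R -> H) : Prop :=
  forall x y, U x y -> forall a b,
    Hd f x y (- b) a = hopp (hmul (Hd f x y a b) (Rn x y)).

(* minimal: in a conformal coordinate, f is harmonic *)
Definition minimal (U : R -> R -> Prop) (f : R -> R -> H) : Prop :=
  forall x y, U x y -> hadd (Hdx (Hdx f) x y) (Hdy (Hdy f) x y) = hzero.

(* conjugate surface:  df* = - *df *)
Definition conjugate_surface (U : R -> R -> Prop) (f fs : R -> R -> H) : Prop :=
  forall x y, U x y ->
    (exists vx vy, is_Hdx fs x y vx /\ is_Hdy fs x y vy) /\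
    forall a b, Hd fs x y a b = hopp (Hd f x y (- b) a).

Definition H2 : Type := (H * H)%type.
Definition v_add (v w : H2) : H2 := (hadd (fst v) (fst w), hadd (snd v) (snd w)).
Definition v_opp (v : H2) : H2 := (hopp (fst v), hopp (snd v)).
Definition v_rmul (v : H2) (q : H) : H2 := (hmul (fst v) q, hmul (snd v) q).
Definition v_scal (r : R) (v : H2) : H2 := (hscal r (fst v), hscal r (snd v)).
Definition v_zero : H2 := (hzero, hzero).

Record M2 := mkM2 { m11 : H; m12 : H; m21 : H; m22 : H }.
Definition m_app (A : M2) (v : H2) : H2 :=
  (hadd (hmul (m11 A) (fst v)) (hmul (m12 A) (snd v)),
   hadd (hmul (m21 A) (fst v)) (hmul (m22 A) (snd v))).
Definition m_mul (A B : M2) : M2 :=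
  mkM2 (hadd (hmul (m11 A) (m11 B)) (hmul (m12 A) (m21 B)))
       (hadd (hmul (m11 A) (m12 B)) (hmul (m12 A) (m22 B)))
       (hadd (hmul (m21 A) (m11 B)) (hmul (m22 A) (m21 B)))
       (hadd (hmul (m21 A) (m12 B)) (hmul (m22 A) (m22 B))).
Definition m_scal (r : R) (A : M2) : M2 :=
  mkM2 (hscal r (m11 A)) (hscal r (m12 A)) (hscal r (m21 A)) (hscal r (m22 A)).
Definition m_opp (A : M2) : M2 := m_scal (-1) A.

Definition e_vec : H2 := (hone, hzero).
Definition psi_vec (f : R -> R -> H) (x y : R) : H2 := (f x y, hone).
Definition Gm (f : R -> R -> H) (x y : R) : M2 := mkM2 hone (f x y) hzero hone.
Definition Ginv (f : R -> R -> H) (x y : R) : M2 := mkM2 hone (hopp (f x y)) hzero hone.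

(* Hopf field: 2 *A = G diag(0, dR) G^{-1}, evaluated on X = a d/dx + b d/dy *)
Definition starA (f Rn : R -> R -> H) (x y a b : R) : M2 :=
  m_scal (/ 2) (m_mul (Gm f x y)
    (m_mul (mkM2 hzero hzero hzero (Hd Rn x y a b)) (Ginv f x y))).
(* A(X) = - ( *A)(JX)  (since ** = -1), JX = -b d/dx + a d/dy *)
Definition hopfA (f Rn : R -> R -> H) (x y a b : R) : M2 :=
  m_opp (starA f Rn x y (- b) a).

Definition A10 (f Rn : R -> R -> H) (x y a b : R) (v : H2) : H2 :=
  v_scal (/ 2) (v_add (m_app (hopfA f Rn x y a b) v)
                      (v_opp (v_rmul (m_app (starA f Rn x y a b) v) hi))).
Definition A01 (f Rn : R -> R -> H) (x y a b : R) (v : H2) : H2 :=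
  v_scal (/ 2) (v_add (m_app (hopfA f Rn x y a b) v)
                      (v_rmul (m_app (starA f Rn x y a b) v) hi)).

Definition dphi (phi : R -> R -> H2) (x y a b : R) : H2 :=
  (Hd (fun s t => fst (phi s t)) x y a b, Hd (fun s t => snd (phi s t)) x y a b).

(* d^S_lambda = d + (lambda-1) A^{(1,0)} + (lambda^{-1}-1) A^{(0,1)}; complex scalars
   act through the complex structure I = right multiplication by i, i.e. by
   right multiplication. *)
Definition dS (f Rn : R -> R -> H) (lam : H) (phi : R -> R -> H2) (x y a b : R) : H2 :=
  v_add (dphi phi x y a b)
    (v_add (v_rmul (A10 f Rn x y a b (phi x y)) (hsub lam hone))
           (v_rmul (A01 f Rn x y a b (phi x y)) (hsub (hinv lam) hone))).

Definition section_smooth (U : R -> R -> Prop) (phi : R -> R -> H2) : Prop :=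
  Hsmooth_on U (fun x y => fst (phi x y)) /\ Hsmooth_on U (fun x y => snd (phi x y)).

Definition parallel (U : R -> R -> Prop) (f Rn : R -> R -> H) (lam : H)
  (phi : R -> R -> H2) : Prop :=
  forall x y, U x y -> forall a b, dS f Rn lam phi x y a b = v_zero.

(* Write phi = (phi1, phi2).  Both Hopf terms A^(1,0) phi and A^(0,1) phi have the shape
   (f w, w), so d^S_mu phi = 0 splits into d phi1 = f d phi2 and an equation for phi2 alone.
   Differentiating f_y = - f_x R and f_x = f_y R, Schwarz's theorem and f_xx + f_yy = 0 give
   *dR = - R dR; together with R^2 = -1 the equation for phi2 becomes
   d (R phi2 - phi2 c) = 0, where c = i (1 + mu) / (1 - mu).  On the connected domain
   R phi2 - phi2 c is therefore constant, and since 1 + c^2 = -4 mu / (1 - mu)^2 is invertible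
   this says phi2 = R m + m c for a constant m.  If m = 0 then phi1 is constant and phi = e n.
   Otherwise f* := f R - phi1 m^-1 has df* = df R = - *df, so it is a conjugate surface, and
   phi1 = (f R - f* ) m is exactly the first component of e alpha + psi beta. *)

From Stdlib Require Import Reals Lra ClassicalEpsilon Classical List.
From Coquelicot Require Coquelicot.
Open Scope R_scope.

(** * Quaternion algebra *)

Lemma H_ext (a b : H) :
  h0 a = h0 b -> h1 a = h1 b -> h2 a = h2 b -> h3 a = h3 b -> a = b.
Proof. destruct a, b; simpl; intros; subst; reflexivity. Qed.

Ltac hcomponents :=
  repeat (let q := fresh "q" in intro q);
  repeat match goal with q : H |- _ =>
    lazymatch goal with |- context [q] =>
      let a := fresh "q" in let b := fresh "q" in let c := fresh "q" in let d := fresh "q" in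
      destruct q as [a b c d] end end;
  apply H_ext; cbv [hinv hsub hmul hadd hopp hscal hconj hnorm2 hzero hone hi h0 h1 h2 h3].

Ltac hring := hcomponents; first [ring | field].
Ltac hfield := hcomponents; field; auto.

Lemma hmul_assoc a b c : hmul a (hmul b c) = hmul (hmul a b) c. Proof. hring. Qed.

Lemma hadd_opp_l a b : hadd (hopp a) (hadd a b) = b. Proof. hring. Qed.

Lemma hnorm2_neq0 a : a <> hzero -> hnorm2 a <> 0.
Proof.
  intros Ha E; apply Ha; destruct a as [a0 a1 a2 a3]; unfold hnorm2 in E; simpl in E.
  apply H_ext; simpl; nra.
Qed.

Lemma hmul_inv_l a : a <> hzero -> hmul (hinv a) a = hone.
Proof.
  intros Ha; pose proof (hnorm2_neq0 a Ha) as N; destruct a as [a0 a1 a2 a3].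
  unfold hnorm2 in N; simpl in N; hfield.
Qed.

Lemma hmul_inv_r a : a <> hzero -> hmul a (hinv a) = hone.
Proof.
  intros Ha; pose proof (hnorm2_neq0 a Ha) as N; destruct a as [a0 a1 a2 a3].
  unfold hnorm2 in N; simpl in N; hfield.
Qed.

Lemma hmul_cancel_l a b c : a <> hzero -> hmul a b = hmul a c -> b = c.
Proof.
  intros Ha E.
  transitivity (hmul (hmul (hinv a) a) b); [rewrite hmul_inv_l by exact Ha; hring|].
  rewrite <- hmul_assoc, E, hmul_assoc, hmul_inv_l by exact Ha; hring.
Qed.

(** * Calculus of quaternion-valued functions *)

Lemma derivable_pt_lim_local f g x l d : 0 < d ->
  (forall t, Rabs (t - x) < d -> f t = g t) ->
  derivable_pt_lim f x l -> derivable_pt_lim g x l.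
Proof.
  intros Hd E D eps Heps. destruct (D eps Heps) as [del Hdel].
  assert (Hm : 0 < Rmin del d) by (apply Rmin_pos; [apply cond_pos | auto]).
  exists (mkposreal _ Hm). intros h hn hl. simpl in hl.
  rewrite <- (E (x + h)), <- (E x).
  - apply Hdel; auto. apply Rlt_le_trans with (1 := hl). apply Rmin_l.
  - rewrite Rminus_diag, Rabs_R0; exact Hd.
  - replace (x + h - x) with h by ring. apply Rlt_le_trans with (1 := hl). apply Rmin_r.
Qed.

Lemma derivable_pt_lim_Rinv f x l : derivable_pt_lim f x l -> f x <> 0 ->
  derivable_pt_lim (fun t => / f t) x (- l / (f x)^2).
Proof.
  intros D N.
  replace (- l / (f x)^2) with ((0 * f x - l * 1) / Rsqr (f x)) by (unfold Rsqr; field; auto).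
  apply (derivable_pt_lim_local (fun t => 1 / f t) _ x _ 1); [lra | intros; unfold Rdiv; ring |].
  exact (derivable_pt_lim_div (fun _ => 1) f x 0 l (derivable_pt_lim_const 1 x) D N).
Qed.

Lemma derivable_pt_lim_eq f x l l' : derivable_pt_lim f x l -> l = l' -> derivable_pt_lim f x l'.
Proof. intros D <-; exact D. Qed.

Definition HD (F : R -> H) (t : R) (v : H) : Prop :=
  derivable_pt_lim (fun s => h0 (F s)) t (h0 v) /\
  derivable_pt_lim (fun s => h1 (F s)) t (h1 v) /\
  derivable_pt_lim (fun s => h2 (F s)) t (h2 v) /\
  derivable_pt_lim (fun s => h3 (F s)) t (h3 v).

Ltac hd_rule :=
  intros; unfold HD in *;
  repeat match goal with D : _ /\ _ |- _ => destruct D end;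
  cbv [hsub hmul hadd hopp hscal hzero]; cbn [h0 h1 h2 h3];
  repeat split;
  (eapply derivable_pt_lim_eq;
   [ repeat first [ apply derivable_pt_lim_plus | apply derivable_pt_lim_minus
                  | apply derivable_pt_lim_mult | apply derivable_pt_lim_opp
                  | apply derivable_pt_lim_const | eassumption ]
   | cbv beta; ring ]).

Lemma HD_const c t : HD (fun _ => c) t hzero.
Proof. hd_rule. Qed.
Lemma HD_add F G t a b : HD F t a -> HD G t b -> HD (fun s => hadd (F s) (G s)) t (hadd a b).
Proof. hd_rule. Qed.
Lemma HD_opp F t a : HD F t a -> HD (fun s => hopp (F s)) t (hopp a).
Proof. hd_rule. Qed.
Lemma HD_sub F G t a b : HD F t a -> HD G t b -> HD (fun s => hsub (F s) (G s)) t (hsub a b).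
Proof. hd_rule. Qed.
Lemma HD_mul F G t a b : HD F t a -> HD G t b ->
  HD (fun s => hmul (F s) (G s)) t (hadd (hmul a (G t)) (hmul (F t) b)).
Proof. hd_rule. Qed.
Lemma HD_inv F t a : HD F t a -> F t <> hzero -> exists w, HD (fun s => hinv (F s)) t w.
Proof.
  intros D NZ. pose proof (hnorm2_neq0 _ NZ) as N.
  destruct D as (d0 & d1 & d2 & d3).
  assert (Dn : exists l, derivable_pt_lim (fun s => hnorm2 (F s)) t l).
  { eexists. unfold hnorm2.
    repeat first [ apply derivable_pt_lim_plus | apply derivable_pt_lim_mult | eassumption ]. }
  destruct Dn as [l Dn].
  pose proof (derivable_pt_lim_Rinv _ _ _ Dn N) as Di.
  refine (ex_intro _ (mkH _ _ _ _) _); cbv [HD hinv hscal hconj]; cbn [h0 h1 h2 h3].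
  repeat split;
    repeat first [ apply derivable_pt_lim_mult | apply derivable_pt_lim_opp | eassumption ].
Qed.

Lemma HD_local F G t v d : 0 < d -> (forall s, Rabs (s - t) < d -> F s = G s) ->
  HD F t v -> HD G t v.
Proof.
  intros Hd E (a0 & a1 & a2 & a3).
  repeat split; eapply derivable_pt_lim_local; eauto; intros s Hs; cbv beta; rewrite E; auto.
Qed.

Lemma dx_spec g x y v : is_dx g x y v -> dx g x y = v.
Proof.
  intros D. unfold dx.
  pose proof (epsilon_spec (inhabits 0) (fun v => is_dx g x y v) (ex_intro _ v D)) as E.
  eapply uniqueness_limite; eauto.
Qed.

Lemma dy_spec g x y v : is_dy g x y v -> dy g x y = v.
Proof.
  intros D. unfold dy.
  pose proof (epsilon_spec (inhabits 0) (fun v => is_dy g x y v) (ex_intro _ v D)) as E.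
  eapply uniqueness_limite; eauto.
Qed.

Lemma Hdx_spec F x y v : is_Hdx F x y v -> Hdx F x y = v.
Proof. intros (d0 & d1 & d2 & d3); apply H_ext; apply dx_spec; assumption. Qed.

Lemma Hdy_spec F x y v : is_Hdy F x y v -> Hdy F x y = v.
Proof. intros (d0 & d1 & d2 & d3); apply H_ext; apply dy_spec; assumption. Qed.

Definition Hdiff_at (F : R -> R -> H) (x y : R) : Prop :=
  is_Hdx F x y (Hdx F x y) /\ is_Hdy F x y (Hdy F x y).

Lemma Hdiff_at_intro F x y vx vy : is_Hdx F x y vx -> is_Hdy F x y vy -> Hdiff_at F x y.
Proof.
  intros Dx Dy; split; [rewrite (Hdx_spec _ _ _ _ Dx) | rewrite (Hdy_spec _ _ _ _ Dy)]; assumption.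
Qed.

Lemma Hd_dx F x y : Hd F x y 1 0 = Hdx F x y.
Proof. unfold Hd; generalize (Hdx F x y) (Hdy F x y); hring. Qed.

Lemma Hd_dy F x y : Hd F x y 0 1 = Hdy F x y.
Proof. unfold Hd; generalize (Hdx F x y) (Hdy F x y); hring. Qed.

Section DifferentiationRules.
Variables (F G : R -> R -> H) (x y : R).
Hypotheses (DF : Hdiff_at F x y) (DG : Hdiff_at G x y).

Lemma Hdiff_at_const c : Hdiff_at (fun _ _ => c) x y.
Proof. exact (Hdiff_at_intro _ _ _ _ _ (HD_const c x) (HD_const c y)). Qed.

Lemma Hd_const c a b : Hd (fun _ _ => c) x y a b = hzero.
Proof.
  unfold Hd; rewrite (Hdx_spec _ _ _ _ (HD_const c x)), (Hdy_spec _ _ _ _ (HD_const c y)); hring.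
Qed.

Lemma Hdiff_at_add : Hdiff_at (fun x y => hadd (F x y) (G x y)) x y.
Proof. exact (Hdiff_at_intro _ _ _ _ _ (HD_add _ _ _ _ _ (proj1 DF) (proj1 DG))
                                       (HD_add _ _ _ _ _ (proj2 DF) (proj2 DG))). Qed.

Lemma Hd_add a b :
  Hd (fun x y => hadd (F x y) (G x y)) x y a b = hadd (Hd F x y a b) (Hd G x y a b).
Proof.
  unfold Hd; rewrite (Hdx_spec _ _ _ _ (HD_add _ _ _ _ _ (proj1 DF) (proj1 DG))),
    (Hdy_spec _ _ _ _ (HD_add _ _ _ _ _ (proj2 DF) (proj2 DG))).
  generalize (Hdx F x y) (Hdy F x y) (Hdx G x y) (Hdy G x y); hring.
Qed.

Lemma Hdiff_at_opp : Hdiff_at (fun x y => hopp (F x y)) x y.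
Proof. exact (Hdiff_at_intro _ _ _ _ _ (HD_opp _ _ _ (proj1 DF)) (HD_opp _ _ _ (proj2 DF))). Qed.

Lemma Hd_opp a b : Hd (fun x y => hopp (F x y)) x y a b = hopp (Hd F x y a b).
Proof.
  unfold Hd; rewrite (Hdx_spec _ _ _ _ (HD_opp _ _ _ (proj1 DF))),
    (Hdy_spec _ _ _ _ (HD_opp _ _ _ (proj2 DF))).
  generalize (Hdx F x y) (Hdy F x y); hring.
Qed.

Lemma Hdiff_at_sub : Hdiff_at (fun x y => hsub (F x y) (G x y)) x y.
Proof. exact (Hdiff_at_intro _ _ _ _ _ (HD_sub _ _ _ _ _ (proj1 DF) (proj1 DG))
                                       (HD_sub _ _ _ _ _ (proj2 DF) (proj2 DG))). Qed.

Lemma Hd_sub a b :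
  Hd (fun x y => hsub (F x y) (G x y)) x y a b = hsub (Hd F x y a b) (Hd G x y a b).
Proof.
  unfold Hd; rewrite (Hdx_spec _ _ _ _ (HD_sub _ _ _ _ _ (proj1 DF) (proj1 DG))),
    (Hdy_spec _ _ _ _ (HD_sub _ _ _ _ _ (proj2 DF) (proj2 DG))).
  generalize (Hdx F x y) (Hdy F x y) (Hdx G x y) (Hdy G x y); hring.
Qed.

Lemma Hdiff_at_mul : Hdiff_at (fun x y => hmul (F x y) (G x y)) x y.
Proof. exact (Hdiff_at_intro _ _ _ _ _ (HD_mul _ _ _ _ _ (proj1 DF) (proj1 DG))
                                       (HD_mul _ _ _ _ _ (proj2 DF) (proj2 DG))). Qed.

Lemma Hd_mul a b : Hd (fun x y => hmul (F x y) (G x y)) x y a b =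
  hadd (hmul (Hd F x y a b) (G x y)) (hmul (F x y) (Hd G x y a b)).
Proof.
  unfold Hd; rewrite (Hdx_spec _ _ _ _ (HD_mul _ _ _ _ _ (proj1 DF) (proj1 DG))),
    (Hdy_spec _ _ _ _ (HD_mul _ _ _ _ _ (proj2 DF) (proj2 DG))).
  generalize (F x y) (G x y) (Hdx F x y) (Hdy F x y) (Hdx G x y) (Hdy G x y); hring.
Qed.

Lemma Hdiff_at_inv : F x y <> hzero -> Hdiff_at (fun x y => hinv (F x y)) x y.
Proof.
  intros NZ.
  destruct (HD_inv (fun s => F s y) x _ (proj1 DF) NZ) as [wx Dx],
    (HD_inv (fun t => F x t) y _ (proj2 DF) NZ) as [wy Dy].
  exact (Hdiff_at_intro _ _ _ _ _ Dx Dy).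
Qed.

End DifferentiationRules.

Lemma open2_lines U x y : open2 U -> U x y -> exists r, 0 < r /\
  (forall s, Rabs (s - x) < r -> U s y) /\ (forall s, Rabs (s - y) < r -> U x s).
Proof.
  intros Ho Hu. destruct (Ho x y Hu) as [r [Hr Hs]].
  exists r; repeat split; auto; intros; apply Hs; auto; rewrite Rminus_diag, Rabs_R0; auto.
Qed.

Section Locality.
Variables (U : R -> R -> Prop) (F G : R -> R -> H) (x y : R).
Hypotheses (HUo : open2 U) (Hu : U x y) (EFG : forall x y, U x y -> F x y = G x y).

Lemma is_Hdx_eq_on v : is_Hdx G x y v -> is_Hdx F x y v.
Proof.
  destruct (open2_lines U x y HUo Hu) as [r [Hr [Lx _]]].
  apply (HD_local (fun t => G t y)) with r; auto; intros s Hs; symmetry; apply EFG, Lx, Hs.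
Qed.

Lemma is_Hdy_eq_on v : is_Hdy G x y v -> is_Hdy F x y v.
Proof.
  destruct (open2_lines U x y HUo Hu) as [r [Hr [_ Ly]]].
  apply (HD_local (fun t => G x t)) with r; auto; intros s Hs; symmetry; apply EFG, Ly, Hs.
Qed.

Lemma Hdiff_at_eq_on : Hdiff_at G x y -> Hdiff_at F x y.
Proof.
  intros [Dx Dy]; exact (Hdiff_at_intro _ _ _ _ _ (is_Hdx_eq_on _ Dx) (is_Hdy_eq_on _ Dy)).
Qed.

Lemma Hd_eq_on a b : Hdiff_at G x y -> Hd F x y a b = Hd G x y a b.
Proof.
  intros [Dx Dy]; unfold Hd.
  rewrite (Hdx_spec _ _ _ _ (is_Hdx_eq_on _ Dx)), (Hdy_spec _ _ _ _ (is_Hdy_eq_on _ Dy)).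
  reflexivity.
Qed.

End Locality.

Lemma smooth_first U g x y : smooth_on U g -> U x y ->
  is_dx g x y (dx g x y) /\ is_dy g x y (dy g x y).
Proof.
  intros [D [D0 HD]] Hu. destruct (proj2 (HD nil) x y Hu) as [Dx Dy]. rewrite D0 in Dx, Dy.
  rewrite (dx_spec _ _ _ _ Dx), (dy_spec _ _ _ _ Dy); auto.
Qed.

Lemma smooth_continuous U g : smooth_on U g -> continuous2_on U g.
Proof. intros [D [<- HD]]; apply HD. Qed.

Lemma smooth_on_eq_on U g g' : open2 U -> (forall x y, U x y -> g x y = g' x y) ->
  smooth_on U g -> smooth_on U g'.
Proof.
  intros Ho E [D [D0 HD]]. subst g.
  exists (fun w => match w with nil => g' | _ => D w end); split; [reflexivity|].
  intros [|b w]; [|exact (HD (b :: w))]. split.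
  - intros x y Hu eps Heps.
    destruct (proj1 (HD nil) x y Hu eps Heps) as [d [Hd Hd']].
    exists d; split; auto. intros x' y' Hu'; rewrite <- !E; auto.
  - intros x y Hu. destruct (proj2 (HD nil) x y Hu) as [Dx Dy].
    destruct (open2_lines U x y Ho Hu) as [r [Hr [Lx Ly]]].
    split; [apply (derivable_pt_lim_local (fun t => D nil t y)) with r
           |apply (derivable_pt_lim_local (fun t => D nil x t)) with r]; auto.
Qed.

Lemma smooth_dx U g : open2 U -> smooth_on U g -> smooth_on U (dx g).
Proof.
  intros Ho Hs. pose proof Hs as [D [D0 HD]].
  apply (smooth_on_eq_on U (D (false :: nil))); auto.
  - intros x y Hu. symmetry; apply dx_spec. rewrite <- D0. apply (proj2 (HD nil)); auto.
  - exists (fun w => D (w ++ false :: nil)); split; [reflexivity|]. intros w; exact (HD _).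
Qed.

Lemma smooth_dy U g : open2 U -> smooth_on U g -> smooth_on U (dy g).
Proof.
  intros Ho Hs. pose proof Hs as [D [D0 HD]].
  apply (smooth_on_eq_on U (D (true :: nil))); auto.
  - intros x y Hu. symmetry; apply dy_spec. rewrite <- D0. apply (proj2 (HD nil)); auto.
  - exists (fun w => D (w ++ true :: nil)); split; [reflexivity|]. intros w; exact (HD _).
Qed.

Section CoquelicotCalculus.
Import Coquelicot.Coquelicot.

Lemma Derive_of_lim f x l : derivable_pt_lim f x l -> Derive f x = l.
Proof. intros D; apply is_derive_unique, is_derive_Reals, D. Qed.

Lemma derivable_pt_lim_zero_eq f a b : a <= b ->
  (forall t, a <= t <= b -> derivable_pt_lim f t 0) -> f a = f b.
Proof.
  intros Hab D. destruct (Rle_lt_or_eq_dec _ _ Hab) as [Hlt | <-]; [|reflexivity].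
  apply eq_is_derive; auto. intros t Ht; apply is_derive_Reals, D, Ht.
Qed.

Lemma Rabs_sub_lt_half s u x r : Rabs (s - u) < r / 2 -> Rabs (u - x) < r / 2 -> Rabs (s - x) < r.
Proof.
  intros H1 H2; replace (s - x) with ((s - u) + (u - x)) by ring.
  eapply Rle_lt_trans; [apply Rabs_triang | lra].
Qed.

Lemma continuity_2d_pt_of_on U h k x y r : 0 < r -> U x y ->
  (forall u v, Rabs (u - x) < r -> Rabs (v - y) < r -> U u v /\ h u v = k u v) ->
  continuous2_on U k -> continuity_2d_pt h x y.
Proof.
  intros Hr Hu E C eps. destruct (C x y Hu eps (cond_pos eps)) as [d [Hd Hd']].
  assert (Hm : 0 < Rmin d r) by (apply Rmin_pos; lra).
  exists (mkposreal _ Hm); simpl; intros u v Hu' Hv'.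
  pose proof (Rmin_l d r); pose proof (Rmin_r d r).
  assert (E0 : U x y /\ h x y = k x y) by (apply E; rewrite Rminus_diag, Rabs_R0; lra).
  destruct (E u v ltac:(lra) ltac:(lra)) as [Uuv ->]; rewrite (proj2 E0).
  apply Hd'; auto; lra.
Qed.

Lemma smooth_schwarz U g x y : open2 U -> smooth_on U g -> U x y ->
  dx (dy g) x y = dy (dx g) x y.
Proof.
  intros Ho Hs Hu.
  pose proof (smooth_dx U g Ho Hs) as Sx; pose proof (smooth_dy U g Ho Hs) as Sy.
  destruct (Ho x y Hu) as [r [Hr Hsq]].
  assert (Dy : forall u v, Rabs (u - x) < r -> Rabs (v - y) < r ->
                 Derive (fun t => g u t) v = dy g u v)
    by (intros; apply Derive_of_lim, (smooth_first U g u v Hs); auto).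
  assert (Dx : forall u v, Rabs (u - x) < r -> Rabs (v - y) < r ->
                 Derive (fun t => g t v) u = dx g u v)
    by (intros; apply Derive_of_lim, (smooth_first U g u v Hs); auto).
  assert (Dyx : forall u v, Rabs (u - x) < r / 2 -> Rabs (v - y) < r / 2 ->
     derivable_pt_lim (fun z => Derive (fun t => g z t) v) u (dx (dy g) u v)).
  { intros u v H1 H2. apply (derivable_pt_lim_local (fun z => dy g z v)) with (r / 2); [lra| |].
    - intros s Hs'; symmetry; apply Dy; [eapply Rabs_sub_lt_half; eauto | lra].
    - apply (smooth_first U _ u v Sy), Hsq; lra. }
  assert (Dxy : forall u v, Rabs (u - x) < r / 2 -> Rabs (v - y) < r / 2 ->
     derivable_pt_lim (fun z => Derive (fun t => g t z) u) v (dy (dx g) u v)).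
  { intros u v H1 H2. apply (derivable_pt_lim_local (fun z => dx g u z)) with (r / 2); [lra| |].
    - intros s Hs'; symmetry; apply Dx; [lra | eapply Rabs_sub_lt_half; eauto].
    - apply (smooth_first U _ u v Sx), Hsq; lra. }
  assert (H0 : Rabs (x - x) < r / 2) by (rewrite Rminus_diag, Rabs_R0; lra).
  assert (H0' : Rabs (y - y) < r / 2) by (rewrite Rminus_diag, Rabs_R0; lra).
  rewrite <- (Derive_of_lim _ _ _ (Dyx x y H0 H0')), <- (Derive_of_lim _ _ _ (Dxy x y H0 H0')).
  apply Schwarz.
  - assert (Hr2 : 0 < r / 2) by lra. exists (mkposreal _ Hr2); simpl; intros u v H1 H2.
    destruct (smooth_first U g u v Hs (Hsq u v ltac:(lra) ltac:(lra))) as [Gx Gy].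
    repeat split; eexists; apply is_derive_Reals; eauto.
  - apply (continuity_2d_pt_of_on U _ (dx (dy g)) x y (r / 2)); auto; [lra| |].
    + intros u v H1 H2; split; [apply Hsq; lra | apply Derive_of_lim, Dyx; auto].
    + exact (smooth_continuous U _ (smooth_dx U _ Ho Sy)).
  - apply (continuity_2d_pt_of_on U _ (dy (dx g)) x y (r / 2)); auto; [lra| |].
    + intros u v H1 H2; split; [apply Hsq; lra | apply Derive_of_lim, Dxy; auto].
    + exact (smooth_continuous U _ (smooth_dy U _ Ho Sx)).
Qed.

End CoquelicotCalculus.

Lemma derivable_pt_lim_zero_ball f c r : (forall s, Rabs (s - c) < r -> derivable_pt_lim f s 0) ->
  forall s, Rabs (s - c) < r -> f s = f c.
Proof.
  intros D s Hs. apply Rabs_def2 in Hs.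
  destruct (Rle_dec c s).
  - symmetry; apply derivable_pt_lim_zero_eq; auto; intros t Ht; apply D, Rabs_def1; lra.
  - apply derivable_pt_lim_zero_eq; [lra|]; intros t Ht; apply D, Rabs_def1; lra.
Qed.

Lemma const_on_connected U g : open2 U -> connected2 U ->
  (forall x y, U x y -> is_dx g x y 0 /\ is_dy g x y 0) ->
  forall x y x' y', U x y -> U x' y' -> g x' y' = g x y.
Proof.
  intros Ho Hc D x0 y0 x y H0 Hu.
  assert (L : forall x y, U x y -> exists r, 0 < r /\ forall x' y',
             Rabs (x' - x) < r -> Rabs (y' - y) < r -> U x' y' /\ g x' y' = g x y).
  { intros x1 y1 Hu1. destruct (Ho x1 y1 Hu1) as [r [Hr Hs]]. exists r; split; auto.
    intros x' y' H1 H2. split; auto. transitivity (g x' y1).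
    - apply (derivable_pt_lim_zero_ball (fun t => g x' t) y1 r); auto.
      intros s Hs'; apply D, Hs; auto.
    - apply (derivable_pt_lim_zero_ball (fun t => g t y1) x1 r); auto.
      intros s Hs'; apply D, Hs; auto; rewrite Rminus_diag, Rabs_R0; auto. }
  assert (Hopen : forall P : R -> Prop, open2 (fun x y => U x y /\ P (g x y))).
  { intros P x1 y1 [Hu1 E]. destruct (L x1 y1 Hu1) as [r [Hr Hr']]. exists r; split; auto.
    intros x' y' H1 H2. destruct (Hr' x' y' H1 H2) as [U' ->]; auto. }
  destruct (Hc (fun x y => U x y /\ g x y = g x0 y0) (fun x y => U x y /\ g x y <> g x0 y0))
    as [A | A].
  - exact (Hopen (fun v => v = g x0 y0)).
  - exact (Hopen (fun v => v <> g x0 y0)).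
  - intros x1 y1 Hu1. destruct (classic (g x1 y1 = g x0 y0)); [left | right]; auto.
  - intros x1 y1 Hu1 [[_ E] [_ N]]; auto.
  - apply A; auto.
  - exfalso; apply (A x0 y0 H0); reflexivity.
Qed.

Lemma Hconst_on_connected U F : open2 U -> connected2 U ->
  (forall x y, U x y -> Hdiff_at F x y /\ forall a b, Hd F x y a b = hzero) ->
  exists n, forall x y, U x y -> F x y = n.
Proof.
  intros Ho Hc D.
  destruct (classic (exists x0 y0, U x0 y0)) as [[x0 [y0 H0]] | NE];
    [exists (F x0 y0) | exists hzero; intros x y Hu; exfalso; eauto].
  intros x y Hu.
  assert (Z : forall x y, U x y -> is_Hdx F x y hzero /\ is_Hdy F x y hzero).
  { intros x1 y1 Hu1. destruct (D x1 y1 Hu1) as [[Dx Dy] Z].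
    rewrite <- Hd_dx, Z in Dx; rewrite <- Hd_dy, Z in Dy; auto. }
  apply H_ext;
    [ apply (const_on_connected U (fun a b => h0 (F a b)))
    | apply (const_on_connected U (fun a b => h1 (F a b)))
    | apply (const_on_connected U (fun a b => h2 (F a b)))
    | apply (const_on_connected U (fun a b => h3 (F a b))) ]; auto;
    intros x1 y1 Hu1; destruct (Z x1 y1 Hu1) as [(? & ? & ? & ?) (? & ? & ? & ?)];
    split; assumption.
Qed.

Lemma Hsmooth_Hdiff_at U F x y : Hsmooth_on U F -> U x y -> Hdiff_at F x y.
Proof.
  intros (S0 & S1 & S2 & S3) Hu.
  destruct (smooth_first _ _ _ _ S0 Hu), (smooth_first _ _ _ _ S1 Hu),
    (smooth_first _ _ _ _ S2 Hu), (smooth_first _ _ _ _ S3 Hu).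
  split; repeat split; assumption.
Qed.

Lemma Hsmooth_dx U F : open2 U -> Hsmooth_on U F -> Hsmooth_on U (Hdx F).
Proof. intros Ho (S0 & S1 & S2 & S3); repeat split; apply smooth_dx; auto. Qed.

Lemma Hsmooth_dy U F : open2 U -> Hsmooth_on U F -> Hsmooth_on U (Hdy F).
Proof. intros Ho (S0 & S1 & S2 & S3); repeat split; apply smooth_dy; auto. Qed.

Lemma Hsmooth_schwarz U F x y : open2 U -> Hsmooth_on U F -> U x y ->
  Hdx (Hdy F) x y = Hdy (Hdx F) x y.
Proof. intros Ho (S0 & S1 & S2 & S3) Hu; apply H_ext; apply (smooth_schwarz U); auto. Qed.

(** * The right normal of a minimal surface *)

Section RightNormal.
Variables (U : R -> R -> Prop) (f Rn : R -> R -> H).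
Hypotheses (HUo : open2 U) (Hfs : Hsmooth_on U f)
  (Hfx : forall x y, U x y -> Hdx f x y <> hzero) (HR : right_normal U f Rn).

Lemma right_normal_dy x y : U x y -> Hdy f x y = hopp (hmul (Hdx f x y) (Rn x y)).
Proof.
  intros Hu; pose proof (HR x y Hu 1 0) as E; rewrite Hd_dx in E; rewrite <- E; unfold Hd; hring.
Qed.

Lemma right_normal_dx x y : U x y -> Hdx f x y = hmul (Hdy f x y) (Rn x y).
Proof.
  intros Hu; pose proof (HR x y Hu 0 1) as E; rewrite Hd_dy in E.
  transitivity (hopp (Hd f x y (- (1)) 0)); [unfold Hd; hring | rewrite E; hring].
Qed.

Lemma right_normal_sqr x y : U x y -> hmul (Rn x y) (Rn x y) = hopp hone.
Proof.
  intros Hu; apply (hmul_cancel_l (Hdx f x y)); auto.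
  transitivity (hopp (hmul (hopp (hmul (Hdx f x y) (Rn x y))) (Rn x y)));
    [generalize (Hdx f x y) (Rn x y); hring|].
  rewrite <- (right_normal_dy x y Hu), <- (right_normal_dx x y Hu); generalize (Hdx f x y); hring.
Qed.

Lemma right_normal_Hdiff_at x y : U x y -> Hdiff_at Rn x y.
Proof.
  intros Hu.
  apply (Hdiff_at_eq_on U Rn (fun x y => hsub hzero (hmul (hinv (Hdx f x y)) (Hdy f x y)))
           x y HUo Hu).
  - intros x1 y1 Hu1; rewrite (right_normal_dy x1 y1 Hu1).
    generalize (Hfx x1 y1 Hu1); generalize (Hdx f x1 y1) (Rn x1 y1); intros X Rp HX.
    transitivity (hmul (hmul (hinv X) X) Rp);
      [rewrite hmul_inv_l by exact HX | generalize (hinv X)]; hring.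
  - apply Hdiff_at_sub; [apply Hdiff_at_const|]. apply Hdiff_at_mul.
    + apply Hdiff_at_inv; [apply (Hsmooth_Hdiff_at U), Hu; apply Hsmooth_dx; auto | auto].
    + apply (Hsmooth_Hdiff_at U); auto; apply Hsmooth_dy; auto.
Qed.

Hypothesis Hmin : minimal U f.

(* Differentiate f_y = - f_x R in x and f_x = f_y R in y; by Schwarz and f_xx + f_yy = 0 the
   two mixed derivatives agree exactly when f_x R_x = f_x R R_y. *)
Lemma right_normal_dx_eq x y : U x y -> Hdx Rn x y = hmul (Rn x y) (Hdy Rn x y).
Proof.
  intros Hu.
  assert (Dfx : Hdiff_at (Hdx f) x y) by (apply (Hsmooth_Hdiff_at U), Hu; apply Hsmooth_dx; auto).
  assert (Dfy : Hdiff_at (Hdy f) x y) by (apply (Hsmooth_Hdiff_at U), Hu; apply Hsmooth_dy; auto).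
  assert (DR := right_normal_Hdiff_at x y Hu).
  assert (Eyx : Hdx (Hdy f) x y =
                hopp (hadd (hmul (Hdx (Hdx f) x y) (Rn x y)) (hmul (Hdx f x y) (Hdx Rn x y)))).
  { rewrite <- (Hd_dx (Hdy f)), <- (Hd_dx (Hdx f)), <- (Hd_dx Rn).
    rewrite (Hd_eq_on U (Hdy f) (fun x y => hopp (hmul (Hdx f x y) (Rn x y))) x y HUo Hu
               right_normal_dy).
    - rewrite Hd_opp, Hd_mul; auto. apply Hdiff_at_mul; auto.
    - apply Hdiff_at_opp, Hdiff_at_mul; auto. }
  assert (Exy : Hdy (Hdx f) x y =
                hadd (hmul (Hdy (Hdy f) x y) (Rn x y)) (hmul (Hdy f x y) (Hdy Rn x y))).
  { rewrite <- (Hd_dy (Hdx f)), <- (Hd_dy (Hdy f)), <- (Hd_dy Rn).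
    rewrite (Hd_eq_on U (Hdx f) (fun x y => hmul (Hdy f x y) (Rn x y)) x y HUo Hu right_normal_dx).
    - rewrite Hd_mul; auto.
    - apply Hdiff_at_mul; auto. }
  assert (S := Hsmooth_schwarz U f x y HUo Hfs Hu).
  assert (M := Hmin x y Hu).
  assert (Eyy : Hdy (Hdy f) x y = hopp (Hdx (Hdx f) x y))
    by (rewrite <- (hadd_opp_l (Hdx (Hdx f) x y) (Hdy (Hdy f) x y)), M; hring).
  rewrite Exy, Eyx, Eyy, (right_normal_dy x y Hu) in S.
  apply (hmul_cancel_l (Hdx f x y)); auto.
  revert S; generalize (Hdx (Hdx f) x y) (Hdx f x y) (Rn x y) (Hdx Rn x y) (Hdy Rn x y).
  intros A X Rp Rx Ry S.
  transitivity (hsub (hopp (hmul A Rp)) (hopp (hadd (hmul A Rp) (hmul X Rx)))); [hring|].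
  rewrite S; hring.
Qed.

Lemma right_normal_star x y a b : U x y ->
  Hd Rn x y (- b) a = hopp (hmul (Rn x y) (Hd Rn x y a b)).
Proof.
  intros Hu; unfold Hd; rewrite (right_normal_dx_eq x y Hu).
  transitivity (hadd (hscal (- b) (hmul (Rn x y) (Hdy Rn x y)))
                     (hscal (- a) (hmul (hmul (Rn x y) (Rn x y)) (Hdy Rn x y)))).
  - rewrite (right_normal_sqr x y Hu); hring.
  - generalize (Rn x y) (Hdy Rn x y); hring.
Qed.

End RightNormal.

(** * The associated family of connections *)

Definition mu_c (mu : H) : H := hmul (hmul hi (hadd hone mu)) (hinv (hsub hone mu)).

Definition mu_s (mu : H) : H := hsub (hadd mu (hinv mu)) (hscal 2 hone).
Definition mu_t (mu : H) : H := hsub (hinv mu) mu.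
(* (1 + c^2)^-1 for c = mu_c mu, since 1 + c^2 = -4 mu / (1 - mu)^2. *)
Definition mu_k (mu : H) : H := hscal (- / 4) (hmul (hmul (hsub hone mu) (hsub hone mu)) (hinv mu)).

(* Second component of (mu - 1) A^(1,0) phi + (mu^-1 - 1) A^(0,1) phi once *dR = - R dR is
   used, with Y = dR(X) phi2; the first component is f times it. *)
Definition hopf_part (Rp Y mu : H) : H :=
  hscal (/ 4) (hadd (hmul (hmul Rp Y) (mu_s mu)) (hmul (hmul Y hi) (mu_t mu))).

Lemma starA_app f Rn x y a b v : m_app (starA f Rn x y a b) v =
  (hmul (f x y) (hscal (/ 2) (hmul (Hd Rn x y a b) (snd v))),
   hscal (/ 2) (hmul (Hd Rn x y a b) (snd v))).
Proof.
  cbv [starA m_scal m_mul m_app Gm Ginv]; cbn [fst snd m11 m12 m21 m22].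
  generalize (f x y) (Hd Rn x y a b) (fst v) (snd v); intros q1 q2 q3 q4; f_equal; hring.
Qed.

Lemma hopfA_app f Rn x y a b v : m_app (hopfA f Rn x y a b) v =
  (hmul (f x y) (hscal (- / 2) (hmul (Hd Rn x y (- b) a) (snd v))),
   hscal (- / 2) (hmul (Hd Rn x y (- b) a) (snd v))).
Proof.
  cbv [hopfA starA m_opp m_scal m_mul m_app Gm Ginv]; cbn [fst snd m11 m12 m21 m22].
  generalize (f x y) (Hd Rn x y (- b) a) (fst v) (snd v); intros q1 q2 q3 q4; f_equal; hring.
Qed.

Lemma dS_components f Rn mu phi x y a b :
  let X := hmul (Hd Rn x y (- b) a) (snd (phi x y)) in
  let Y := hmul (Hd Rn x y a b) (snd (phi x y)) in
  let u := hadd (hmul (hscal (/ 4) (hopp (hadd X (hmul Y hi)))) (hsub mu hone))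
                (hmul (hscal (/ 4) (hsub (hmul Y hi) X)) (hsub (hinv mu) hone)) in
  dS f Rn mu phi x y a b =
  (hadd (Hd (fun x y => fst (phi x y)) x y a b) (hmul (f x y) u),
   hadd (Hd (fun x y => snd (phi x y)) x y a b) u).
Proof.
  intros X Y u.
  cbv [dS A10 A01 dphi v_add v_rmul v_scal v_opp]; rewrite starA_app, hopfA_app.
  cbn [fst snd]; subst u X Y.
  generalize (Hd (fun x y => fst (phi x y)) x y a b) (Hd (fun x y => snd (phi x y)) x y a b)
    (f x y) (hmul (Hd Rn x y (- b) a) (snd (phi x y))) (hmul (Hd Rn x y a b) (snd (phi x y)))
    (hsub mu hone) (hsub (hinv mu) hone).
  intros q1 q2 q3 q4 q5 q6 q7; f_equal; hring.
Qed.

Lemma hopf_part_spec (Rp D w mu : H) :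
  hadd (hmul (hscal (/ 4) (hopp (hadd (hmul (hopp (hmul Rp D)) w) (hmul (hmul D w) hi))))
             (hsub mu hone))
       (hmul (hscal (/ 4) (hsub (hmul (hmul D w) hi) (hmul (hopp (hmul Rp D)) w)))
             (hsub (hinv mu) hone)) =
  hopf_part Rp (hmul D w) mu.
Proof. unfold hopf_part, mu_s, mu_t; generalize (hinv mu); hring. Qed.

Lemma dS_hopf_part f Rn mu phi x y a b :
  Hd Rn x y (- b) a = hopp (hmul (Rn x y) (Hd Rn x y a b)) ->
  dS f Rn mu phi x y a b =
  (hadd (Hd (fun x y => fst (phi x y)) x y a b)
        (hmul (f x y) (hopf_part (Rn x y) (hmul (Hd Rn x y a b) (snd (phi x y))) mu)),
   hadd (Hd (fun x y => snd (phi x y)) x y a b)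
        (hopf_part (Rn x y) (hmul (Hd Rn x y a b) (snd (phi x y))) mu)).
Proof.
  intros Estar; rewrite dS_components; cbv zeta; rewrite Estar, hopf_part_spec; reflexivity.
Qed.

Lemma pair_eq_zero_iff (d1 d2 F u : H) :
  (hadd d1 (hmul F u), hadd d2 u) = v_zero <-> hadd d2 u = hzero /\ d1 = hmul F d2.
Proof.
  unfold v_zero; split.
  - intros E.
    assert (E1 : hadd d1 (hmul F u) = hzero) by exact (f_equal fst E).
    assert (E2 : hadd d2 u = hzero) by exact (f_equal snd E).
    split; auto.
    transitivity (hadd (hsub (hadd d1 (hmul F u)) (hmul F (hadd d2 u))) (hmul F d2)); [hring|].
    rewrite E1, E2; hring.
  - intros [E2 E1]; f_equal; [|exact E2].
    rewrite E1; transitivity (hmul F (hadd d2 u)); [hring | rewrite E2; hring].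
Qed.

(* Each direction writes its goal as an explicit combination of the defects assumed to vanish. *)
Lemma hopf_core_iff (Rp Y v s t c : H) :
  hadd (hmul Rp Rp) hone = hzero ->
  hsub (hmul s c) (hmul hi t) = hzero -> hsub (hmul c s) (hmul hi t) = hzero ->
  hadd (hscal 4 hone) (hadd s (hmul (hmul hi t) c)) = hzero ->
  hadd (hscal 4 hone) (hadd s (hmul (hmul c hi) t)) = hzero ->
  hadd v (hscal (/ 4) (hadd (hmul (hmul Rp Y) s) (hmul (hmul Y hi) t))) = hzero <->
  hsub (hadd Y (hmul Rp v)) (hmul v c) = hzero.
Proof.
  set (eR := hadd (hmul Rp Rp) hone); set (esc := hsub (hmul s c) (hmul hi t));
  set (ecs := hsub (hmul c s) (hmul hi t));
  set (eitc := hadd (hscal 4 hone) (hadd s (hmul (hmul hi t) c)));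
  set (ecit := hadd (hscal 4 hone) (hadd s (hmul (hmul c hi) t)));
  set (V := hadd v (hscal (/ 4) (hadd (hmul (hmul Rp Y) s) (hmul (hmul Y hi) t))));
  set (W := hsub (hadd Y (hmul Rp v)) (hmul v c)).
  intros ER Esc Ecs Eitc Ecit; split; intros E.
  - transitivity (hadd (hadd (hscal (/ 4) (hmul Y eitc)) (hscal (/ 4) (hmul (hmul Rp Y) esc)))
                       (hadd (hopp (hscal (/ 4) (hmul (hmul eR Y) s)))
                             (hsub (hmul Rp V) (hmul V c))));
      [subst eR esc eitc V W; hring | rewrite ER, Esc, Eitc, E; hring].
  - transitivity (hadd (hadd (hscal (/ 4) (hadd (hmul (hmul Rp W) s) (hmul (hmul W hi) t)))
                             (hscal (/ 4) (hmul v ecit)))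
                       (hadd (hopp (hscal (/ 4) (hmul (hmul eR v) s)))
                             (hscal (/ 4) (hmul (hmul Rp v) ecs))));
      [subst eR ecs ecit V W; hring | rewrite E, Ecit, ER, Ecs; hring].
Qed.

Lemma complex_form mu : is_complex mu -> mu <> hzero -> mu <> hone ->
  exists u v, mu = mkH u v 0 0 /\ u * u + v * v <> 0 /\ (1 - u) * (1 - u) + v * v <> 0.
Proof.
  intros [E2 E3] N0 N1; destruct mu as [u v p q]; cbn in E2, E3; subst p q.
  exists u, v; repeat split; intros E.
  - apply N0; assert (u = 0) by nra; assert (v = 0) by nra; subst; reflexivity.
  - apply N1; assert (u = 1) by nra; assert (v = 0) by nra; subst; reflexivity.
Qed.

Ltac mu_field mu :=
  let u := fresh "u" in let v := fresh "v" in let N1 := fresh "N" in let N2 := fresh "N" in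
  destruct (complex_form mu) as (u & v & -> & N1 & N2); auto;
  cbv [mu_c mu_s mu_t mu_k];
  hcomponents; field; repeat split; intros Hc; first [apply N1; nra | apply N2; nra].

Section ComplexParameter.
Variable mu : H.
Hypotheses (Hmu : is_complex mu) (Hmu0 : mu <> hzero) (Hmu1 : mu <> hone).

Lemma mu_sc : hsub (hmul (mu_s mu) (mu_c mu)) (hmul hi (mu_t mu)) = hzero.
Proof. mu_field mu. Qed.
Lemma mu_cs : hsub (hmul (mu_c mu) (mu_s mu)) (hmul hi (mu_t mu)) = hzero.
Proof. mu_field mu. Qed.
Lemma mu_itc : hadd (hscal 4 hone) (hadd (mu_s mu) (hmul (hmul hi (mu_t mu)) (mu_c mu))) = hzero.
Proof. mu_field mu. Qed.
Lemma mu_cit : hadd (hscal 4 hone) (hadd (mu_s mu) (hmul (hmul (mu_c mu) hi) (mu_t mu))) = hzero.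
Proof. mu_field mu. Qed.
Lemma mu_kc : hsub (hmul (mu_k mu) (mu_c mu)) (hmul (mu_c mu) (mu_k mu)) = hzero.
Proof. mu_field mu. Qed.
Lemma mu_k_inv : hsub (hmul (hadd hone (hmul (mu_c mu) (mu_c mu))) (mu_k mu)) hone = hzero.
Proof. mu_field mu. Qed.

End ComplexParameter.

Lemma hopf_part_eq0_iff (Rp Y v mu : H) :
  is_complex mu -> mu <> hzero -> mu <> hone -> hmul Rp Rp = hopp hone ->
  hadd v (hopf_part Rp Y mu) = hzero <-> hsub (hadd Y (hmul Rp v)) (hmul v (mu_c mu)) = hzero.
Proof.
  intros Hmu Hmu0 Hmu1 ER; apply hopf_core_iff;
    auto using mu_sc, mu_cs, mu_itc, mu_cit.
  rewrite ER; hring.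
Qed.

Lemma beta_of_twist (Rp b c k : H) :
  hmul Rp Rp = hopp hone ->
  hsub (hmul k c) (hmul c k) = hzero -> hsub (hmul (hadd hone (hmul c c)) k) hone = hzero ->
  let m := hopp (hmul (hsub (hmul Rp b) (hmul b c)) k) in
  b = hadd (hmul Rp m) (hmul m c).
Proof.
  intros ER Ekc Ek m; subst m.
  assert (ER' : hadd (hmul Rp Rp) hone = hzero) by (rewrite ER; hring).
  transitivity (hadd b (hadd (hadd (hopp (hmul (hmul (hadd (hmul Rp Rp) hone) b) k))
                                   (hopp (hmul (hmul Rp b) (hsub (hmul k c) (hmul c k)))))
                             (hadd (hmul b (hsub (hmul (hadd hone (hmul c c)) k) hone))
                                   (hmul (hmul b c) (hsub (hmul k c) (hmul c k))))));
    [rewrite ER', Ekc, Ek; hring | hring].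
Qed.

Lemma twist_of_beta (Rp m c : H) : hmul Rp Rp = hopp hone ->
  hsub (hmul Rp (hadd (hmul Rp m) (hmul m c))) (hmul (hadd (hmul Rp m) (hmul m c)) c) =
  hopp (hmul m (hadd hone (hmul c c))).
Proof.
  intros ER.
  transitivity (hsub (hmul (hmul Rp Rp) m) (hmul m (hmul c c))); [hring | rewrite ER; hring].
Qed.

Lemma pair_eq_iff (p : H2) (a b : H) : p = (a, b) <-> fst p = a /\ snd p = b.
Proof.
  destruct p as [p1 p2]; cbn [fst snd]; split.
  - intros E; exact (conj (f_equal fst E) (f_equal snd E)).
  - intros [-> ->]; reflexivity.
Qed.

Lemma e_vec_rmul_iff (p : H2) (n : H) : p = v_rmul e_vec n <-> fst p = n /\ snd p = hzero.
Proof.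
  replace (v_rmul e_vec n) with (n, hzero) by (unfold v_rmul, e_vec; cbn [fst snd]; f_equal; hring).
  apply pair_eq_iff.
Qed.

Lemma psi_rep_iff (p : H2) (F Rp fsv m c : H) :
  p = v_add (v_rmul e_vec (hsub (hopp (hmul fsv m)) (hmul (hmul F m) c)))
            (v_rmul (F, hone) (hadd (hmul Rp m) (hmul m c))) <->
  fst p = hmul (hsub (hmul F Rp) fsv) m /\ snd p = hadd (hmul Rp m) (hmul m c).
Proof.
  replace (v_add _ _) with (hmul (hsub (hmul F Rp) fsv) m, hadd (hmul Rp m) (hmul m c))
    by (unfold v_add, v_rmul, e_vec; cbn [fst snd]; f_equal; hring).
  apply pair_eq_iff.
Qed.

(** * Parallel sections *)

Definition twist (Rn : R -> R -> H) (c : H) (g : R -> R -> H) (x y : R) : H :=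
  hsub (hmul (Rn x y) (g x y)) (hmul (g x y) c).

Definition beta_section (Rn : R -> R -> H) (c m : H) (x y : R) : H :=
  hadd (hmul (Rn x y) m) (hmul m c).

Lemma Hdiff_at_twist Rn c g x y : Hdiff_at Rn x y -> Hdiff_at g x y -> Hdiff_at (twist Rn c g) x y.
Proof. intros DR Dg; apply Hdiff_at_sub; apply Hdiff_at_mul; auto using Hdiff_at_const. Qed.

Lemma Hd_twist Rn c g x y a b : Hdiff_at Rn x y -> Hdiff_at g x y ->
  Hd (twist Rn c g) x y a b =
  hsub (hadd (hmul (Hd Rn x y a b) (g x y)) (hmul (Rn x y) (Hd g x y a b))) (hmul (Hd g x y a b) c).
Proof.
  intros DR Dg; unfold twist.
  rewrite Hd_sub, !Hd_mul, Hd_const by auto using Hdiff_at_mul, Hdiff_at_const.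
  generalize (g x y) (Hd g x y a b); hring.
Qed.

Lemma Hdiff_at_beta_section Rn c m x y : Hdiff_at Rn x y -> Hdiff_at (beta_section Rn c m) x y.
Proof. intros DR; apply Hdiff_at_add; apply Hdiff_at_mul; auto using Hdiff_at_const. Qed.

Lemma Hd_beta_section Rn c m x y a b : Hdiff_at Rn x y ->
  Hd (beta_section Rn c m) x y a b = hmul (Hd Rn x y a b) m.
Proof.
  intros DR; unfold beta_section.
  rewrite Hd_add, !Hd_mul, !Hd_const by auto using Hdiff_at_mul, Hdiff_at_const.
  generalize (Hd Rn x y a b); hring.
Qed.

Section ParallelSections.
Variables (U : R -> R -> Prop) (f Rn : R -> R -> H) (mu : H).
Hypotheses (HUo : open2 U) (HUc : connected2 U) (Hfs : Hsmooth_on U f)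
  (Hfx : forall x y, U x y -> Hdx f x y <> hzero) (HR : right_normal U f Rn)
  (Hmin : minimal U f) (Hmu : is_complex mu) (Hmu0 : mu <> hzero) (Hmu1 : mu <> hone).
Variable phi : R -> R -> H2.
Hypothesis Hphi : section_smooth U phi.

Local Notation phi1 := (fun x y => fst (phi x y)).
Local Notation phi2 := (fun x y => snd (phi x y)).
Local Notation c := (mu_c mu).

Let RR x y (Hu : U x y) : hmul (Rn x y) (Rn x y) = hopp hone :=
  right_normal_sqr U f Rn Hfx HR x y Hu.
Let DR x y (Hu : U x y) : Hdiff_at Rn x y := right_normal_Hdiff_at U f Rn HUo Hfs Hfx HR x y Hu.
Let Dphi1 x y (Hu : U x y) : Hdiff_at phi1 x y := Hsmooth_Hdiff_at U _ x y (proj1 Hphi) Hu.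
Let Dphi2 x y (Hu : U x y) : Hdiff_at phi2 x y := Hsmooth_Hdiff_at U _ x y (proj2 Hphi) Hu.

Lemma parallel_iff_twist : parallel U f Rn mu phi <->
  forall x y, U x y -> forall a b,
    Hd (twist Rn c phi2) x y a b = hzero /\ Hd phi1 x y a b = hmul (f x y) (Hd phi2 x y a b).
Proof.
  assert (Pt : forall x y, U x y -> forall a b, dS f Rn mu phi x y a b = v_zero <->
    Hd (twist Rn c phi2) x y a b = hzero /\ Hd phi1 x y a b = hmul (f x y) (Hd phi2 x y a b)).
  { intros x y Hu a b.
    rewrite (dS_hopf_part _ _ _ _ _ _ _ _
               (right_normal_star U f Rn HUo Hfs Hfx HR Hmin x y a b Hu)),
      pair_eq_zero_iff, hopf_part_eq0_iff, Hd_twist by auto.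
    reflexivity. }
  split; intros P x y Hu a b; apply Pt; auto.
Qed.

Lemma twist_const_iff :
  (forall x y, U x y -> forall a b, Hd (twist Rn c phi2) x y a b = hzero) <->
  exists m, forall x y, U x y -> snd (phi x y) = beta_section Rn c m x y.
Proof.
  split.
  - intros Z.
    destruct (Hconst_on_connected U (twist Rn c phi2) HUo HUc) as [n Hn].
    { intros x y Hu; split; [apply Hdiff_at_twist|]; auto. }
    exists (hopp (hmul n (mu_k mu))); intros x y Hu.
    rewrite <- (Hn x y Hu); unfold twist, beta_section.
    apply beta_of_twist; auto using mu_kc, mu_k_inv.
  - intros [m Hm] x y Hu a b.
    rewrite (Hd_eq_on U _ (fun _ _ => hopp (hmul m (hadd hone (hmul c c)))) x y HUo Hu);
      [apply Hd_const | | apply Hdiff_at_const].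
    intros x1 y1 Hu1; unfold twist; rewrite Hm by exact Hu1.
    apply twist_of_beta; auto.
Qed.

Lemma Hd_phi2_of_beta m : (forall x y, U x y -> snd (phi x y) = beta_section Rn c m x y) ->
  forall x y, U x y -> forall a b, Hd phi2 x y a b = hmul (Hd Rn x y a b) m.
Proof.
  intros Hm x y Hu a b.
  rewrite (Hd_eq_on U phi2 (beta_section Rn c m) x y HUo Hu Hm), Hd_beta_section;
    auto using Hdiff_at_beta_section.
Qed.

Lemma conjugate_surface_of_parallel m : m <> hzero ->
  (forall x y, U x y -> snd (phi x y) = beta_section Rn c m x y) ->
  (forall x y, U x y -> forall a b, Hd phi1 x y a b = hmul (f x y) (Hd phi2 x y a b)) ->
  conjugate_surface U f (fun x y => hsub (hmul (f x y) (Rn x y)) (hmul (fst (phi x y)) (hinv m))).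
Proof.
  intros Hm0 Hm E1 x y Hu.
  assert (Df : Hdiff_at f x y) by exact (Hsmooth_Hdiff_at U f x y Hfs Hu).
  assert (Dfs : Hdiff_at (fun x y => hsub (hmul (f x y) (Rn x y)) (hmul (fst (phi x y)) (hinv m)))
                         x y)
    by (apply Hdiff_at_sub; apply Hdiff_at_mul; auto using Hdiff_at_const).
  split; [do 2 eexists; exact Dfs|].
  intros a b.
  rewrite Hd_sub, !Hd_mul, Hd_const, E1, (Hd_phi2_of_beta m Hm), (HR x y Hu a b)
    by auto using Hdiff_at_mul, Hdiff_at_const.
  rewrite <- (hmul_assoc (f x y)), <- (hmul_assoc (Hd Rn x y a b)), hmul_inv_r by exact Hm0.
  generalize (f x y) (Rn x y) (Hd f x y a b) (Hd Rn x y a b) (fst (phi x y)); hring.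
Qed.

Lemma Hd_phi1_of_conjugate m fs : conjugate_surface U f fs ->
  (forall x y, U x y -> fst (phi x y) = hmul (hsub (hmul (f x y) (Rn x y)) (fs x y)) m) ->
  (forall x y, U x y -> snd (phi x y) = beta_section Rn c m x y) ->
  forall x y, U x y -> forall a b, Hd phi1 x y a b = hmul (f x y) (Hd phi2 x y a b).
Proof.
  intros Hcs Ephi1 Hm x y Hu a b.
  destruct (Hcs x y Hu) as [[vx [vy [Dx Dy]]] Efs].
  assert (Dfs : Hdiff_at fs x y) by exact (Hdiff_at_intro _ _ _ _ _ Dx Dy).
  assert (Df : Hdiff_at f x y) by exact (Hsmooth_Hdiff_at U f x y Hfs Hu).
  rewrite (Hd_eq_on U phi1 _ x y HUo Hu Ephi1)
    by (apply Hdiff_at_mul; [apply Hdiff_at_sub; [apply Hdiff_at_mul|]|apply Hdiff_at_const]; auto).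
  rewrite Hd_mul, Hd_sub, Hd_mul, Hd_const, Efs, (HR x y Hu a b), (Hd_phi2_of_beta m Hm)
    by auto using Hdiff_at_mul, Hdiff_at_sub, Hdiff_at_const.
  generalize (f x y) (Rn x y) (fs x y) (Hd f x y a b) (Hd Rn x y a b); hring.
Qed.

Lemma parallel_iff_beta_section : parallel U f Rn mu phi <->
  exists m, (forall x y, U x y -> snd (phi x y) = beta_section Rn c m x y) /\
    ((m = hzero /\ exists n, forall x y, U x y -> fst (phi x y) = n) \/
     (m <> hzero /\ exists fs, conjugate_surface U f fs /\
        forall x y, U x y -> fst (phi x y) = hmul (hsub (hmul (f x y) (Rn x y)) (fs x y)) m)).
Proof.
  rewrite parallel_iff_twist; split.
  - intros P.
    destruct (proj1 twist_const_iff (fun x y Hu a b => proj1 (P x y Hu a b))) as [m Hm].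
    exists m; split; [exact Hm|].
    destruct (classic (m = hzero)) as [-> | Hm0]; [left | right].
    + split; [reflexivity|]. apply (Hconst_on_connected U phi1 HUo HUc).
      intros x y Hu; split; [auto|]; intros a b.
      rewrite (proj2 (P x y Hu a b)), (Hd_phi2_of_beta hzero Hm) by exact Hu; hring.
    + split; [exact Hm0|].
      eexists; split;
        [exact (conjugate_surface_of_parallel m Hm0 Hm (fun x y Hu a b => proj2 (P x y Hu a b)))|].
      intros x y Hu.
      transitivity (hmul (hmul (fst (phi x y)) (hinv m)) m); [|generalize (hinv m); hring].
      rewrite <- hmul_assoc, hmul_inv_l by exact Hm0; hring.
  - intros (m & Hm & Hphi1) x y Hu a b; split.
    + apply twist_const_iff; eauto.
    + destruct Hphi1 as [[-> [n Hn]] | [_ [fs [Hcs Ephi1]]]].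
      * rewrite (Hd_eq_on U phi1 (fun _ _ => n) x y HUo Hu Hn), Hd_const, (Hd_phi2_of_beta hzero Hm)
          by auto using Hdiff_at_const.
        hring.
      * exact (Hd_phi1_of_conjugate m fs Hcs Ephi1 Hm x y Hu a b).
Qed.

End ParallelSections.

Theorem mainTheorem5
  (U : R -> R -> Prop) (HUo : open2 U) (HUc : connected2 U)
  (f Rn : R -> R -> H)
  (Hf : conformal_immersion U f) (HR : right_normal U f Rn) (Hmin : minimal U f)
  (mu : H) (Hmu : is_complex mu) (Hmu0 : mu <> hzero) (Hmu1 : mu <> hone)
  (phi : R -> R -> H2) (Hphi : section_smooth U phi) :
  parallel U f Rn mu phi <->
  ((exists n : H, forall x y, U x y -> phi x y = v_rmul e_vec n) \/
   (exists m : H, m <> hzero /\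
    exists fs : R -> R -> H, conjugate_surface U f fs /\
    forall x y, U x y ->
      let c := hmul (hmul hi (hadd hone mu)) (hinv (hsub hone mu)) in
      let alpha := hsub (hopp (hmul (fs x y) m)) (hmul (hmul (f x y) m) c) in
      let beta := hadd (hmul (Rn x y) m) (hmul m c) in
      phi x y = v_add (v_rmul e_vec alpha) (v_rmul (psi_vec f x y) beta))).
Proof.
  destruct Hf as [Hfs Hconf].
  assert (Hfx : forall x y, U x y -> Hdx f x y <> hzero) by (intros x y Hu; apply (Hconf x y Hu)).
  rewrite (parallel_iff_beta_section U f Rn mu HUo HUc Hfs Hfx HR Hmin Hmu Hmu0 Hmu1 phi Hphi).
  unfold psi_vec, beta_section; setoid_rewrite e_vec_rmul_iff; setoid_rewrite psi_rep_iff.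
  split.
  - intros (m & Hm & [[-> [n Hn]] | [Hm0 [fs [Hcs Ephi1]]]]).
    + left; exists n; intros x y Hu; split; [apply Hn, Hu | rewrite (Hm x y Hu); hring].
    + right; exists m; split; [exact Hm0|]; exists fs; split; [exact Hcs|]; auto.
  - intros [[n Hn] | (m & Hm0 & fs & Hcs & Hrep)].
    + exists hzero; split.
      * intros x y Hu; rewrite (proj2 (Hn x y Hu)); hring.
      * left; split; [reflexivity|]; exists n; intros x y Hu; exact (proj1 (Hn x y Hu)).
    + exists m; split; [|right; split; [exact Hm0|]; exists fs; split; [exact Hcs|]];
        intros x y Hu; apply Hrep, Hu.
Qed.
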